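(* Let $S=\{s_1,\dots,s_p\}$ and let $F=\{C_1,\dots,C_q\}$ be a family of subsets of $S$ with $q\le p$ and $\bigcup_j C_j=S$. Construct the graph $G$ as follows: vertices $a_1,\dots,a_p$, $b_1,\dots,b_q$, $z_1,\dots,z_p$, $r_1,\dots,r_{p+1}$, $w$, $r'_{p+1}$; edges $a_ib_j$ whenever $s_i\in C_j$, $a_iz_i$ for all $i\in[p]$, $b_ir_j$ for all $i\in[q]$ and $j\in[p+1]$, and $r_{p+1}w$, $wr'_{p+1}$. Then $G$ is a comb-convex bipartite graph with parts $X=\{a_1,\dots,a_p,r_1,\dots,r_{p+1},r'_{p+1}\}$ and $Y=\{b_1,\dots,b_q,z_1,\dots,z_p,w\}$ (with respect to the comb on $X$ with backbone path $r_1r_2\cdots r_{p+1}$ and teeth $a_i$ attached to $r_i$ for $i\in[p]$ and $r'_{p+1}$ attached to $r_{p+1}$), and for every nonnegative integer $t$, $S$ has a cover of size at most $t$ if and only if $G$ has a vertex-edge dominating set of size at most $t+1$.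
   Context: A cover of $S$ in the set system $(S,F)$ is a subfamily $C\subseteq F$ whose union is $S$. A vertex-edge dominating set of a graph $G$ is a set $D\subseteq V(G)$ such that for every edge $uv$, $(N_G[u]\cup N_G[v])\cap D\neq\emptyset$, where $N_G[x]$ is the closed neighbourhood of $x$. A comb is a tree obtained from a path (the backbone) by attaching one pendant vertex (a tooth) to each vertex of the path. A bipartite graph $G=(X\cup Y,E)$ is comb-convex if there is a comb $T$ with vertex set $X$ such that for every $y\in Y$, $N_G(y)$ induces a subtree of $T$. *)

From HB Require Import structures.
From mathcomp Require Import all_boot.
Set Implicit Arguments. Unset Strict Implicit. Unset Printing Implicit Defensive.

Section Generic.
Variable V : finType.

Definition cnbhd (e : rel V) (x : V) : {set V} := x |: [set y | e x y].
Definition onbhd (e : rel V) (x : V) : {set V} := [set y | e x y].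

Definition ve_dominating (e : rel V) (D : {set V}) : Prop :=
  forall u v, e u v -> (cnbhd e u :|: cnbhd e v) :&: D != set0.

Definition bipartite_parts (e : rel V) (X Y : {set V}) : Prop :=
  [/\ X :&: Y = set0, X :|: Y = setT, symmetric e, irreflexive e &
      forall u v, e u v -> (u \in X) && (v \in Y) || (u \in Y) && (v \in X)].

(* T (an adjacency relation on V) is a comb with vertex set X: a backbone path
   bb 0 - bb 1 - ... - bb (k-1) with a pendant tooth tt i attached to bb i. *)
Definition is_comb (X : {set V}) (T : rel V) : Prop :=
  exists k (bb tt : 'I_k -> V),
    [/\ 0 < k, injective bb /\ injective tt, (forall i j, bb i != tt j),
        X = [set bb i | i : 'I_k] :|: [set tt i | i : 'I_k] &
        forall u v, T u v =
          [exists i : 'I_k, exists j : 'I_k, (j == i.+1 :> nat) &&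
              (((u == bb i) && (v == bb j)) || ((u == bb j) && (v == bb i)))]
          || [exists i : 'I_k, ((u == bb i) && (v == tt i))
                                || ((u == tt i) && (v == bb i))]].

(* A induces a subtree of the tree T: A is nonempty and the subgraph of T
   induced by A is connected (a connected subgraph of a tree is a tree). *)
Definition induces_subtree (T : rel V) (A : {set V}) : Prop :=
  A != set0 /\
  {in A &, forall x y, connect [rel u v | T u v && (u \in A) && (v \in A)] x y}.

Definition comb_convex_wrt (e : rel V) (X Y : {set V}) (T : rel V) : Prop :=
  [/\ bipartite_parts e X Y, is_comb X T &
      forall y, y \in Y -> induces_subtree T (onbhd e y)].
End Generic.

(* Indices are 0-based: A i = a_(i+1), B j = b_(j+1), Z i = z_(i+1),
   R j = r_(j+1) (j : 'I_p.+1, so R ord_max = r_(p+1)), W = w, R' = r'_(p+1). *)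
Inductive vtx (p q : nat) : Type :=
| VA of 'I_p | VB of 'I_q | VZ of 'I_p | VR of 'I_p.+1 | VW | VR'.
Arguments VW {p q}. Arguments VR' {p q}.

Section Construction.
Variables p q : nat.

Definition vtx_code (x : vtx p q) :
  'I_p + 'I_q + 'I_p + 'I_p.+1 + bool :=
  match x with
  | VA i => inl (inl (inl (inl i)))
  | VB j => inl (inl (inl (inr j)))
  | VZ i => inl (inl (inr i))
  | VR j => inl (inr j)
  | VW => inr true
  | VR' => inr false
  end.
Definition vtx_decode (c : 'I_p + 'I_q + 'I_p + 'I_p.+1 + bool) : vtx p q :=
  match c with
  | inl (inl (inl (inl i))) => VA q i
  | inl (inl (inl (inr j))) => VB p j
  | inl (inl (inr i)) => VZ q i
  | inl (inr j) => VR q j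
  | inr true => VW
  | inr false => VR'
  end.
Lemma vtx_codeK : cancel vtx_code vtx_decode. Proof. by case. Qed.
HB.instance Definition _ := Equality.copy (vtx p q) (can_type vtx_codeK).
HB.instance Definition _ := Choice.copy (vtx p q) (can_type vtx_codeK).
HB.instance Definition _ := Countable.copy (vtx p q) (can_type vtx_codeK).
HB.instance Definition _ := Finite.copy (vtx p q) (can_type vtx_codeK).

Variable C : 'I_q -> {set 'I_p}.  (* C j = C_(j+1) as a subset of S = 'I_p *)

Definition G_arc (u v : vtx p q) : bool :=
  match u, v with
  | VA i, VB j => i \in C j
  | VA i, VZ k => i == k
  | VB _, VR _ => true
  | VR j, VW => j == ord_max
  | VW, VR' => true
  | _, _ => false
  end.
Definition G_adj : rel (vtx p q) := fun u v => G_arc u v || G_arc v u.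

Definition X_part : {set vtx p q} :=
  [set x | match x with VA _ | VR _ | VR' => true | _ => false end].
Definition Y_part : {set vtx p q} :=
  [set x | match x with VB _ | VZ _ | VW => true | _ => false end].

Definition comb_arc (u v : vtx p q) : bool :=
  match u, v with
  | VR j, VR j' => j'.+1 == j :> nat
  | VA i, VR j => j == widen_ord (leqnSn p) i
  | VR' , VR j => j == ord_max
  | _, _ => false
  end.
Definition comb_adj : rel (vtx p q) := fun u v => comb_arc u v || comb_arc v u.
End Construction.

From HB Require Import structures.
From mathcomp Require Import all_boot.
Set Implicit Arguments. Unset Strict Implicit. Unset Printing Implicit Defensive.

(* A cover Cv yields the dominating set {r_(p+1)} u {b_j | j in Cv}: the closed
   neighbourhood of r_(p+1) contains every b_j and w, so only the edges a_i z_i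
   remain, and the cover handles them.  Conversely, the edge w r'_(p+1) forces a
   vertex of D into {w, r_(p+1), r'_(p+1)}; each other vertex of D contributes
   at most one set (C_j for b_j, some set containing s_i for a_i or z_i), and
   the edges a_i z_i force these sets to cover S.  Comb-convexity holds because
   N(b_j) is the backbone together with some teeth, N(z_i) = {a_i} and
   N(w) = {r_(p+1), r'_(p+1)}. *)

Lemma induces_subtree_star (V : finType) (T : rel V) (A : {set V}) (r : V) :
  symmetric T -> r \in A ->
  (forall x, x \in A -> connect [rel u v | T u v && (u \in A) && (v \in A)] x r) ->
  induces_subtree T A.
Proof.
move=> symT rA to_r; split; first by apply/set0Pn; exists r.
move=> x y xA yA; apply: connect_trans (to_r x xA) _.
rewrite sym_connect_sym; first exact: to_r.
by move=> u v /=; rewrite symT andbAC.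
Qed.

Lemma card_Some_preimage_lt (T : finType) (A : {set option T}) :
  None \in A -> #|[set x | Some x \in A]| < #|A|.
Proof.
move=> NA; rewrite (cardsD1 None A) NA add1n ltnS.
rewrite -(card_imset _ (@Some_inj _)); apply: subset_leq_card.
by apply/subsetP => o /imsetP [x]; rewrite !inE => xA ->.
Qed.

Section CoverReduction.
Variables (p q : nat) (C : 'I_q -> {set 'I_p}).
Notation V := (vtx p q).
Notation N := (cnbhd (G_adj C)).

Lemma meet_cnbhdU (D : {set V}) u v x :
  x \in D -> x \in N u :|: N v -> (N u :|: N v) :&: D != set0.
Proof. by move=> xD xN; apply/set0Pn; exists x; rewrite inE xN xD. Qed.

Lemma cover_ve_dominating (Cv : {set 'I_q}) :
  \bigcup_(j in Cv) C j = [set: 'I_p] ->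
  ve_dominating (G_adj C) (VR q ord_max |: [set VB p j | j in Cv]).
Proof.
move=> cov; set D := _ |: _.
have rD : VR q ord_max \in D by rewrite !inE eqxx.
suff arc_dom u v : G_arc C u v -> (N u :|: N v) :&: D != set0.
  by move=> u v /orP [/arc_dom | /arc_dom]; rewrite // setUC.
case: u => [i|j|i|k||]; case: v => [i'|j'|i'|k'||] //= uv.
- by apply: (meet_cnbhdU rD); rewrite !inE /G_adj /= ?orbT.
- have /bigcupP [j jCv iCj] : i \in \bigcup_(j in Cv) C j by rewrite cov inE.
  apply: (@meet_cnbhdU _ _ _ (VB p j)); first by rewrite !inE imset_f ?orbT.
  by rewrite !inE /G_adj /= iCj.
- by apply: (meet_cnbhdU rD); rewrite !inE /G_adj /= ?orbT.
- by apply: (meet_cnbhdU rD); move/eqP: uv => ->; rewrite !inE eqxx.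
- by apply: (meet_cnbhdU rD); rewrite !inE /G_adj /= ?eqxx ?orbT.
Qed.

Definition cover_index (x : V) : option 'I_q :=
  match x with
  | VB j => Some j
  | VA i | VZ i => [pick j | i \in C j]
  | _ => None
  end.

Definition index_cover (D : {set V}) : {set 'I_q} :=
  [set j | Some j \in cover_index @: D].

Lemma card_index_cover_lt (D : {set V}) :
  ve_dominating (G_adj C) D -> #|index_cover D| < #|D|.
Proof.
move=> dom; apply: leq_trans (leq_imset_card cover_index D).
apply: card_Some_preimage_lt.
have /set0Pn [x] := dom VW VR' isT.
rewrite !inE => /andP [xN xD]; apply/imsetP; exists x => //.
by case: x xN {xD}.
Qed.

Hypothesis cov : \bigcup_(j < q) C j = [set: 'I_p].

Lemma cover_index_near (i : 'I_p) x :
  x \in N (VA q i) :|: N (VZ q i) -> exists2 j, cover_index x = Some j & i \in C j.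
Proof.
have picked : exists2 j, [pick j | i \in C j] = Some j & i \in C j.
  case: pickP => [j iCj | noC]; first by exists j.
  have /bigcupP [j _] : i \in \bigcup_(j < q) C j by rewrite cov inE.
  by rewrite noC.
rewrite !inE /G_adj; case: x => [a|b|a|r||] //=; rewrite ?orbF.
- by case/orP => [/eqP [->] | /eqP ->].
- by exists b.
- by case/orP => [/eqP <- | /eqP [->]].
Qed.

Lemma index_cover_covers (D : {set V}) :
  ve_dominating (G_adj C) D -> \bigcup_(j in index_cover D) C j = [set: 'I_p].
Proof.
move=> dom; apply/setP => i; rewrite inE; apply/bigcupP.
have az_edge : G_adj C (VA q i) (VZ q i) by rewrite /G_adj /= eqxx.
have /set0Pn [x] := dom _ _ az_edge.
rewrite inE => /andP [/cover_index_near [j xj iCj] xD].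
by exists j; rewrite // inE -xj imset_f.
Qed.

End CoverReduction.

Section CombConvexity.
Variables (p q : nat) (C : 'I_q -> {set 'I_p}).
Notation V := (vtx p q).

Lemma G_bipartite : bipartite_parts (G_adj C) (@X_part p q) (@Y_part p q).
Proof.
split.
- by apply/setP => x; rewrite !inE; case: x.
- by apply/setP => x; rewrite !inE; case: x.
- by move=> u v; rewrite /G_adj orbC.
- by move=> x; rewrite /G_adj; case: x.
- by move=> u v; rewrite /G_adj !inE; case: u; case: v.
Qed.

Definition comb_tooth (j : 'I_p.+1) : V :=
  if unlift ord_max j is Some i then VA q i else VR'.

Lemma comb_tooth_lift (i : 'I_p) : comb_tooth (lift ord_max i) = VA q i.
Proof. by rewrite /comb_tooth liftK. Qed.

Lemma comb_tooth_max : comb_tooth ord_max = VR'.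
Proof. by rewrite /comb_tooth unlift_none. Qed.

Lemma widen_lift_max (i : 'I_p) : widen_ord (leqnSn p) i = lift ord_max i.
Proof. by apply: val_inj; rewrite [RHS]lift_max. Qed.

Lemma comb_toothP (j : 'I_p.+1) : comb_tooth j = VR' \/ exists i, comb_tooth j = VA q i.
Proof.
by case: (unliftP ord_max j) => [i|] ->;
  rewrite ?comb_tooth_lift ?comb_tooth_max; [right; exists i | left].
Qed.

Lemma comb_tooth_inj : injective comb_tooth.
Proof.
move=> j k; case: (unliftP ord_max j) => [j'|] ->;
  case: (unliftP ord_max k) => [k'|] ->;
  by rewrite ?comb_tooth_lift ?comb_tooth_max // => [[->]].
Qed.

Lemma X_part_comb :
  @X_part p q = [set VR q j | j : 'I_p.+1] :|: [set comb_tooth j | j : 'I_p.+1].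
Proof.
apply/setP => x; rewrite !inE; apply/esym.
case: x => [i|j|i|k||] /=.
2,3,5: by apply: negbTE; apply/norP; split; apply/imsetP => -[k _] //;
  case: (comb_toothP k) => [|[a]] ->.
- by rewrite -comb_tooth_lift imset_f ?orbT.
- by rewrite imset_f.
- by rewrite -comb_tooth_max imset_f ?orbT.
Qed.

Lemma comb_adjE (u v : V) :
  comb_adj u v =
    [exists i : 'I_p.+1, exists j : 'I_p.+1, (j == i.+1 :> nat) &&
        (((u == VR q i) && (v == VR q j)) || ((u == VR q j) && (v == VR q i)))]
    || [exists i : 'I_p.+1, ((u == VR q i) && (v == comb_tooth i))
                            || ((u == comb_tooth i) && (v == VR q i))].
Proof.
apply/idP/idP.
- rewrite /comb_adj; case: u => [a|b|a|k||]; case: v => [a'|b'|a'|k'||] //=;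
    rewrite ?orbF ?widen_lift_max => uv; apply/orP.
  + right; apply/existsP; exists (lift ord_max a).
    by rewrite comb_tooth_lift (eqP uv) !eqxx ?orbT.
  + right; apply/existsP; exists (lift ord_max a').
    by rewrite comb_tooth_lift (eqP uv) !eqxx ?orbT.
  + left; case/orP: uv => /eqP uv; apply/existsP; [exists k' | exists k];
      apply/existsP; [exists k | exists k']; by rewrite uv !eqxx ?orbT.
  + right; apply/existsP; exists ord_max.
    by rewrite comb_tooth_max (eqP uv) !eqxx ?orbT.
  + right; apply/existsP; exists ord_max.
    by rewrite comb_tooth_max (eqP uv) !eqxx ?orbT.
- case/orP.
  + case/existsP => i /existsP [j] /andP [/eqP ij].
    by case/orP => /andP [/eqP -> /eqP ->]; rewrite /comb_adj /= ij eqxx ?orbT.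
  + case/existsP => i; case: (unliftP ord_max i) => [i'|] ->;
      rewrite ?comb_tooth_lift ?comb_tooth_max;
      by case/orP => /andP [/eqP -> /eqP ->]; rewrite /comb_adj /= ?widen_lift_max eqxx ?orbT.
Qed.

Lemma comb_adj_is_comb : is_comb (@X_part p q) (@comb_adj p q).
Proof.
exists p.+1, (@VR p q), comb_tooth; split => //.
- by split; [move=> j k [] | exact: comb_tooth_inj].
- by move=> j k; case: (comb_toothP k) => [|[a]] ->.
- exact: X_part_comb.
- exact: comb_adjE.
Qed.

Lemma comb_adj_sym : symmetric (@comb_adj p q).
Proof. by move=> u v; rewrite /comb_adj orbC. Qed.

Lemma G_nbhd_subtree y :
  y \in @Y_part p q -> induces_subtree (@comb_adj p q) (onbhd (G_adj C) y).
Proof.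
rewrite inE; case: y => [i|j|i|k||] // _.
- apply: (@induces_subtree_star _ _ _ (VR q ord0) comb_adj_sym).
    by rewrite inE.
  set A := onbhd _ _.
  have backbone_to_r1 (k : 'I_p.+1) :
      connect [rel u v | comb_adj u v && (u \in A) && (v \in A)] (VR q k) (VR q ord0).
    case: k => k; elim: k => [|k IHk] k_lt; first by apply/eq_connect0/congr1/val_inj.
    apply: connect_trans (IHk (ltnW k_lt)); apply: connect1.
    by rewrite /= /comb_adj !inE /G_adj /= eqxx.
  case=> [a|b|a|k||]; rewrite inE /G_adj //= => aCj.
  apply: connect_trans (backbone_to_r1 (lift ord_max a)); apply: connect1.
  by rewrite /= /comb_adj !inE /G_adj /= widen_lift_max eqxx aCj.
- apply: (@induces_subtree_star _ _ _ (VA q i) comb_adj_sym).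
    by rewrite inE /G_adj /= eqxx.
  by case=> [a|b|a|k||]; rewrite inE /G_adj //= ?orbF => /eqP ->.
- apply: (@induces_subtree_star _ _ _ (VR q ord_max) comb_adj_sym).
    by rewrite inE /G_adj /= eqxx.
  case=> [a|b|a|k||]; rewrite inE /G_adj //= ?orbF.
  + by move/eqP ->.
  + by move=> _; apply: connect1; rewrite /= /comb_adj !inE /G_adj /= eqxx.
Qed.

End CombConvexity.

Theorem lemma4 (p q : nat) (C : 'I_q -> {set 'I_p}) :
  q <= p ->
  \bigcup_(j < q) C j = [set: 'I_p] ->
  comb_convex_wrt (G_adj C) (@X_part p q) (@Y_part p q) (@comb_adj p q) /\
  (forall t : nat,
     (exists Cv : {set 'I_q}, #|Cv| <= t /\ \bigcup_(j in Cv) C j = [set: 'I_p])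
     <->
     (exists D : {set vtx p q}, #|D| <= t.+1 /\ ve_dominating (G_adj C) D)).
Proof.
move=> _ cov; split.
  by split; [exact: G_bipartite | exact: comb_adj_is_comb | exact: G_nbhd_subtree].
move=> t; split.
- move=> [Cv [Cv_le Cv_cov]].
  exists (VR q ord_max |: [set VB p j | j in Cv]); split; last exact: cover_ve_dominating.
  rewrite cardsU1 -add1n leq_add ?leq_b1 //.
  exact: leq_trans (leq_imset_card _ _) Cv_le.
- move=> [D [D_le D_dom]]; exists (index_cover C D); split.
    by rewrite -ltnS (leq_trans (card_index_cover_lt D_dom)).
  exact: index_cover_covers.
Qed.
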